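(* Let $t\ge 0$ and $s\ge 1$ be integers, and let $G$ be a finite incomparability graph such that no $t$-minor of $G$ is isomorphic to the star $K_{1,s}$ (a center adjacent to $s$ pairwise non-adjacent leaves). Then $\hat\beta_t(G)\le s$.
   Context: All graphs are finite and simple. An incomparability graph is a graph whose complement admits a transitive orientation. For an integer $t\ge 0$, a graph $H$ is a $t$-shallow minor ($t$-minor) of a graph $G$ if there are pairwise disjoint sets $V_v\subseteq V(G)$, $v\in V(H)$, each inducing a connected subgraph of $G$ of radius at most $t$, such that $uv\in E(H)$ if and only if some edge of $G$ joins $V_u$ and $V_v$ (i.e. $H$ is obtained by contracting connected subgraphs of radius at most $t$ and deleting vertices, but not edges). For a graph $H$, $\beta(H)$ is the minimum number of cliques partitioning $V(H)$; for $x\in V(H)$, $H_x$ is the subgraph induced by the closed neighborhood $N_H[x]$; $\tilde\beta(H)=\min_{x\in V(H)}\beta(H_x)$; and $\hat\beta_t(G)=\max\{\tilde\beta(H): H \text{ a nonempty } t\text{-minor of } G\}$. *)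

From mathcomp Require Import all_boot.
Set Implicit Arguments. Unset Strict Implicit. Unset Printing Implicit Defensive.

Definition simple_graph (T : finType) (e : rel T) : Prop :=
  symmetric e /\ irreflexive e.

Definition complement_orientation (T : finType) (e : rel T) (o : rel T) : Prop :=
  [/\ forall x y, o x y -> (x != y) && ~~ e x y,
      forall x y, x != y -> ~~ e x y -> o x y || o y x
    & forall x y, o x y -> ~~ o y x].

Definition incomparability_graph (T : finType) (e : rel T) : Prop :=
  exists o : rel T, complement_orientation e o /\ transitive o.

Definition radius_le (T : finType) (e : rel T) (A : {set T}) (t : nat) : Prop :=
  exists2 c, c \in A &
    forall x, x \in A ->
      exists p : seq T,
        [/\ path e c p, all (fun y => y \in A) p, last c p = x & size p <= t].

Definition tminor (t : nat) (T : finType) (e : rel T) (U : finType) (h : rel U)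
  : Prop :=
  exists V : U -> {set T},
    [/\ forall u v, u != v -> [disjoint V u & V v],
        forall u, radius_le e (V u) t
      & forall u v, u != v ->
          (h u v <-> exists x y, [/\ x \in V u, y \in V v & e x y])].

(* The star K_{1,s}: centre None, leaves Some i. *)
Definition star_rel (s : nat) : rel (option 'I_s) :=
  fun x y => (x == None) != (y == None).

Definition clique_coverb (U : finType) (h : rel U) (A : {set U}) (k : nat) : bool :=
  [exists f : {ffun U -> 'I_k},
     [forall x in A, forall y in A, ((x != y) && (f x == f y)) ==> h x y]].

Lemma clique_cover_exists (U : finType) (h : rel U) (A : {set U}) :
  exists k, clique_coverb h A k.
Proof.
exists #|U|; apply/existsP; exists (finfun (fun x => enum_rank x)).
apply/forall_inP => x _; apply/forall_inP => y _; apply/implyP.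
case/andP=> nxy; rewrite !ffunE => /eqP /enum_rank_inj exy.
by rewrite exy eqxx in nxy.
Qed.

Definition beta (U : finType) (h : rel U) (A : {set U}) : nat :=
  ex_minn (clique_cover_exists h A).

Definition closed_nbhd (U : finType) (h : rel U) (x : U) : {set U} :=
  [set y | (y == x) || h x y].

(* beta~(H) = min_x beta(H_x)  (the default #|U| is never smaller than the
   minimum for nonempty U since beta(H_x) <= #|U|). *)
Definition beta_tilde (U : finType) (h : rel U) : nat :=
  \big[minn/#|U|]_(x : U) beta h (closed_nbhd h x).

From mathcomp Require Import all_boot.
Set Implicit Arguments. Unset Strict Implicit. Unset Printing Implicit Defensive.

(* A transitive orientation of the complement of G orients all non-edges
   between two disjoint connected branch sets with no edge between them in
   the same direction.  Hence it descends to a transitive orientation of the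
   complement of any minor, so every minor H of G is again an incomparability
   graph.  A chain of that orientation inside N_H[x] is an independent set of
   neighbours of x (after dropping x), so it has at most s elements since
   K_{1,s} is not a t-minor of G.  By Mirsky's theorem N_H[x] then splits into
   s antichains, which are cliques of H. *)

Lemma path_last_const (T : Type) (e : rel T) (A : pred T) (P : T -> bool) :
  (forall a b, a \in A -> b \in A -> e a b -> P a = P b) ->
  forall p c, c \in A -> path e c p -> all A p -> P (last c p) = P c.
Proof.
move=> eP; elim=> [|y p IHp] c cA //= /andP[ecy py] /andP[yA pA].
by rewrite IHp // (eP c y).
Qed.

Lemma radius_le_const (T : finType) (e : rel T) (A : {set T}) t (P : T -> bool) :
  radius_le e A t ->
  (forall a b, a \in A -> b \in A -> e a b -> P a = P b) ->
  {in A &, forall a b, P a = P b}.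
Proof.
case=> c cA reach_c eP.
have Pc a : a \in A -> P a = P c.
  by case/reach_c=> p [cp pA <- _]; apply: (path_last_const eP).
by move=> a b /Pc -> /Pc ->.
Qed.

Section UniformOrientation.

Variables (T : finType) (e o : rel T).
Hypotheses (e_sym : symmetric e) (o_compl : complement_orientation e o)
  (o_trans : transitive o).

Lemma orientation_edge_src x y z : e x y -> y != z -> ~~ e y z -> o x z -> o y z.
Proof.
case: o_compl => o_nonedge o_total _ exy yz nyz oxz.
case/orP: (o_total y z yz nyz) => // ozy.
by have /andP[_] := o_nonedge _ _ (o_trans oxz ozy); rewrite exy.
Qed.

Lemma orientation_edge_tgt x y z : e x y -> z != y -> ~~ e z y -> o z x -> o z y.
Proof.
case: o_compl => o_nonedge o_total _ exy zy nzy ozx.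
case/orP: (o_total z y zy nzy) => // oyz.
by have /andP[_] := o_nonedge _ _ (o_trans oyz ozx); rewrite e_sym exy.
Qed.

Lemma orientation_uniform (A B : {set T}) tA tB :
  radius_le e A tA -> radius_le e B tB -> [disjoint A & B] ->
  {in A & B, forall a b, ~~ e a b} ->
  forall a b a' b', a \in A -> b \in B -> a' \in A -> b' \in B ->
    o a b -> o a' b'.
Proof.
move=> rA rB dAB nAB a b a' b' aA bB a'A b'B.
have AB_neq x y : x \in A -> y \in B -> x != y.
  by move=> xA yB; apply: contraTneq yB => <-; rewrite (disjointFr dAB xA).
have o_A b0 : b0 \in B -> {in A &, forall a1 a2, o a1 b0 = o a2 b0}.
  move=> b0B; apply: (radius_le_const rA) => a1 a2 a1A a2A e12.
  by apply/idP/idP; apply: orientation_edge_src; rewrite ?AB_neq ?nAB // e_sym.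
have o_B a0 : a0 \in A -> {in B &, forall b1 b2, o a0 b1 = o a0 b2}.
  move=> a0A; apply: (radius_le_const rB) => b1 b2 b1B b2B e12.
  by apply/idP/idP; apply: orientation_edge_tgt; rewrite ?AB_neq ?nAB // e_sym.
by rewrite (o_A _ bB _ _ aA a'A) (o_B _ a'A _ _ bB b'B).
Qed.

End UniformOrientation.

Section MinorOrientation.

Variables (t : nat) (T : finType) (e o : rel T) (U : finType) (h : rel U)
  (V : U -> {set T}).
Hypotheses (e_sym : symmetric e) (o_compl : complement_orientation e o)
  (o_trans : transitive o) (h_sym : symmetric h).
Hypotheses (V_disj : forall u v, u != v -> [disjoint V u & V v])
  (V_rad : forall u, radius_le e (V u) t)
  (V_adj : forall u v, u != v ->
     (h u v <-> exists x y, [/\ x \in V u, y \in V v & e x y])).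

Definition branch_orientation : rel U := fun u v =>
  [&& u != v, ~~ h u v & [exists a in V u, exists b in V v, o a b]].

Lemma branch_nonempty u : exists a, a \in V u.
Proof. by case: (V_rad u) => a aV _; exists a. Qed.

Lemma branch_nonadj u v : u != v -> ~~ h u v -> {in V u & V v, forall x y, ~~ e x y}.
Proof. by move=> uv nh x y xV yV; apply: contra nh => exy; apply/(V_adj uv); exists x, y. Qed.

Lemma branch_orientationP u v :
  branch_orientation u v -> {in V u & V v, forall a b, o a b}.
Proof.
case/and3P=> uv nh /exists_inP[a0 a0V /exists_inP[b0 b0V oab]] a b aV bV.
exact: (orientation_uniform e_sym o_compl o_trans (V_rad u) (V_rad v)
  (V_disj uv) (branch_nonadj uv nh) a0V b0V).
Qed.

Lemma branch_orientation_complement : complement_orientation h branch_orientation.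
Proof.
case: o_compl => _ o_total o_asym; split.
- by move=> u v /and3P[-> -> _].
- move=> u v uv nh; have [a aV] := branch_nonempty u; have [b bV] := branch_nonempty v.
  have ab : a != b by apply: contraTneq bV => <-; rewrite (disjointFr (V_disj uv) aV).
  rewrite /branch_orientation uv nh eq_sym uv h_sym nh /=.
  case/orP: (o_total a b ab (branch_nonadj uv nh aV bV)) => oab; apply/orP.
    by left; apply/exists_inP; exists a => //; apply/exists_inP; exists b.
  by right; apply/exists_inP; exists b => //; apply/exists_inP; exists a.
- move=> u v Quv; apply/negP=> Qvu.
  have [a aV] := branch_nonempty u; have [b bV] := branch_nonempty v.
  by move: (o_asym _ _ (branch_orientationP Quv aV bV)); rewrite (branch_orientationP Qvu bV aV).
Qed.

Lemma branch_orientation_trans : transitive branch_orientation.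
Proof.
case: o_compl => o_nonedge _ _; case: branch_orientation_complement => _ _ Q_asym.
move=> v u w Quv Qvw; have [b bV] := branch_nonempty v.
have o_uw : {in V u & V w, forall a c, o a c}.
  move=> a c aV cV.
  exact: o_trans (branch_orientationP Quv aV bV) (branch_orientationP Qvw bV cV).
have uw : u != w by apply: contraTneq (Q_asym _ _ Qvw) => <-; rewrite negbK.
have nh : ~~ h u w.
  apply/negP => /(V_adj uw)[x [y [xV yV exy]]].
  by have /andP[_] := o_nonedge _ _ (o_uw _ _ xV yV); rewrite exy.
have [a aV] := branch_nonempty u; have [c cV] := branch_nonempty w.
rewrite /branch_orientation uw nh; apply/exists_inP; exists a => //.
by apply/exists_inP; exists c; rewrite ?o_uw.
Qed.

End MinorOrientation.

Lemma tminor_incomparability t (T : finType) (e : rel T) (U : finType) (h : rel U) :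
  symmetric e -> symmetric h -> incomparability_graph e -> tminor t e h ->
  incomparability_graph h.
Proof.
move=> e_sym h_sym [o [o_compl o_trans]] [V [V_disj V_rad V_adj]].
exists (branch_orientation o h V); split.
- exact: branch_orientation_complement e_sym o_compl o_trans h_sym V_disj V_rad V_adj.
- exact: branch_orientation_trans e_sym o_compl o_trans h_sym V_disj V_rad V_adj.
Qed.

Lemma tminor_induced t (T : finType) (e : rel T) (U : finType) (h : rel U)
    (U' : finType) (r : rel U') (g : U' -> U) :
  tminor t e h -> injective g ->
  (forall a b, a != b -> r a b = h (g a) (g b)) -> tminor t e r.
Proof.
case=> V [V_disj V_rad V_adj] g_inj r_g; exists (V \o g); split.
- by move=> a b ab; apply: V_disj; rewrite (inj_eq g_inj).
- by move=> a; apply: V_rad.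
- by move=> a b ab; rewrite r_g //; apply: V_adj; rewrite (inj_eq g_inj).
Qed.

Lemma tminor_star t (T : finType) (e : rel T) (U : finType) (h : rel U)
    (x : U) (c : seq U) s :
  simple_graph h -> tminor t e h -> uniq c -> s <= size c ->
  {in c &, forall y z, ~~ h y z} -> {in c, forall y, h x y} ->
  tminor t e (@star_rel s).
Proof.
move=> [h_sym h_irr] Hh c_uniq s_c c_indep c_nbr.
have nth_c (i : 'I_s) : nth x c i \in c by rewrite mem_nth // (leq_trans _ s_c).
have nth_neq (i : 'I_s) : nth x c i != x.
  by apply: contraTneq (c_nbr _ (nth_c i)) => ->; rewrite h_irr.
pose g (a : option 'I_s) := if a is Some i then nth x c i else x.
apply: (tminor_induced (g := g) Hh) => [[i|] [j|] //= gij|[i|] [j|] //= ij].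
- by move/eqP: gij; rewrite nth_uniq ?(leq_trans _ s_c) // => /eqP/val_inj ->.
- by move: (nth_neq i); rewrite gij eqxx.
- by move: (nth_neq j); rewrite -gij eqxx.
- by rewrite /star_rel /= (negbTE (c_indep _ _ (nth_c i) (nth_c j))).
- by rewrite /star_rel /= h_sym c_nbr.
- by rewrite /star_rel /= c_nbr.
Qed.

Lemma closed_nbhd_chain_size t (T : finType) (e : rel T) (U : finType) (h Q : rel U)
    s (x : U) (c : seq U) :
  simple_graph h -> complement_orientation h Q -> transitive Q ->
  tminor t e h -> ~ tminor t e (@star_rel s) ->
  sorted Q c -> {subset c <= closed_nbhd h x} -> size c <= s.
Proof.
move=> h_simple [Q_nonedge _ _] Q_trans Hh no_star Qc c_nbhd.
have [h_sym h_irr] := h_simple; rewrite leqNgt; apply/negP => s_lt_c; apply: no_star.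
have Qc_pair : pairwise Q c by rewrite -sorted_pairwise.
have c_uniq : uniq c.
  by apply: pairwise_uniq Qc_pair => y; apply/negP => /Q_nonedge; rewrite eqxx.
have c_indep : {in c &, forall y z, ~~ h y z}.
  apply/allrelP; rewrite -pairwise_all2rel => [||y z]; last by rewrite h_sym.
  - by apply: sub_pairwise Qc_pair => y z /Q_nonedge /andP[].
  - by move=> y; rewrite h_irr.
pose c' := [seq y <- c | y != x].
apply: (tminor_star (x := x) (c := c') h_simple Hh).
- exact: filter_uniq.
- rewrite -ltnS (leq_trans s_lt_c) // -(count_predC (pred1 x) c) size_filter addnC -addn1.
  by apply: leq_add; rewrite ?count_uniq_mem ?leq_b1.
- by move=> y z; rewrite !mem_filter => /andP[_ yc] /andP[_ zc]; apply: c_indep.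
- move=> y; rewrite mem_filter => /andP[yx /c_nbhd].
  by rewrite inE (negbTE yx).
Qed.

(* Mirsky's theorem; the induction peels off the Q-minimal elements of S. *)
Lemma bounded_chains_levels (U : finType) (Q : rel U) k (S : {set U}) :
  (forall c, sorted Q c -> {subset c <= S} -> size c <= k) ->
  exists f : U -> nat,
    {in S, forall y, f y < k} /\ {in S &, forall y z, Q y z -> f y != f z}.
Proof.
elim: k S => [|k IHk] S chain_le.
  have S0 y : y \in S -> False.
    move=> yS; suff : size [:: y] <= 0 by [].
    by apply: chain_le => // z; rewrite inE => /eqP->.
  by exists (fun=> 0); split=> [y /S0|y z /S0].
pose M := [set y in S | [forall z in S, ~~ Q z y]].
have notM y z : y \in S -> Q y z -> z \notin M.
  by move=> yS Qyz; apply/negP => /setIdP[_ /forall_inP/(_ y yS)]; rewrite Qyz.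
have [f [f_lt f_Q]] : exists f : U -> nat,
    {in S :\: M, forall y, f y < k} /\ {in S :\: M &, forall y z, Q y z -> f y != f z}.
  apply: IHk => [[|y c]] // Qyc ycS; have /setDP[yS yM] := ycS y (mem_head y c).
  have [z zS Qzy] : exists2 z, z \in S & Q z y.
    move: yM; rewrite inE yS => /forall_inPn[z zS]; rewrite negbK.
    by exists z.
  have := chain_le [:: z, y & c]; rewrite /= Qzy ltnS; apply=> //.
  by move=> w; rewrite inE => /predU1P[->//|/ycS /setDP[]].
exists (fun y => if y \in M then 0 else (f y).+1); split.
  by move=> y yS; case: ifPn => yM; rewrite // ltnS f_lt // inE yM.
move=> y z yS zS Qyz; rewrite (negbTE (notM _ _ yS Qyz)).
by case: ifPn => yM; rewrite // eqSS f_Q // inE ?yM ?yS ?zS ?(notM _ _ yS Qyz).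
Qed.

Lemma clique_coverb_bounded_chains (U : finType) (h Q : rel U) (A : {set U}) k :
  complement_orientation h Q -> 0 < k ->
  (forall c, sorted Q c -> {subset c <= A} -> size c <= k) ->
  clique_coverb h A k.
Proof.
case: k => // k [_ Q_total _] _ /bounded_chains_levels[f [f_lt f_Q]].
apply/existsP; exists [ffun y => inord (f y)].
apply/forall_inP => y yA; apply/forall_inP => z zA; apply/implyP => /andP[yz].
rewrite !ffunE => /eqP/(congr1 val); rewrite /= !inordK ?f_lt // => fyz.
apply: contraT => nh; case/orP: (Q_total _ _ yz nh) => [Qyz|Qzy].
  by have := f_Q _ _ yA zA Qyz; rewrite fyz eqxx.
by have := f_Q _ _ zA yA Qzy; rewrite fyz eqxx.
Qed.

Lemma bigminn_le (I : eqType) (r : seq I) idx (F : I -> nat) i :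
  i \in r -> \big[minn/idx]_(j <- r) F j <= F i.
Proof.
elim: r => // j r IHr; rewrite inE big_cons => /predU1P[->|ir].
  exact: geq_minl.
exact: leq_trans (geq_minr _ _) (IHr ir).
Qed.

Lemma beta_tilde_le (U : finType) (h : rel U) (x : U) k :
  clique_coverb h (closed_nbhd h x) k -> beta_tilde h <= k.
Proof.
move=> cover; apply: leq_trans (bigminn_le _ _ (mem_index_enum x)) _.
by rewrite /beta; case: ex_minnP => m _; apply.
Qed.

Theorem theorem2p1 (t s : nat) (T : finType) (e : rel T) :
  1 <= s ->
  simple_graph e ->
  incomparability_graph e ->
  ~ tminor t e (@star_rel s) ->
  forall (U : finType) (h : rel U),
    simple_graph h -> 0 < #|U| -> tminor t e h ->
    beta_tilde h <= s.
Proof.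
move=> s_gt0 [e_sym _] e_inc no_star U h h_simple /card_gt0P[x _] Hh.
have [Q [Q_compl Q_trans]] := tminor_incomparability e_sym h_simple.1 e_inc Hh.
apply: (@beta_tilde_le _ _ x); apply: (clique_coverb_bounded_chains Q_compl s_gt0).
by move=> c; apply: (closed_nbhd_chain_size h_simple Q_compl Q_trans Hh no_star).
Qed.
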